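(* For all integers $r\ge 2$ and $e\ge 2$ there exists $n_0(r,e)$ such that $f_r(n,(r-1)e,e)=h_r(n,e)$ for all $n\ge n_0(r,e)$.
   Context: An $r$-graph is an $r$-uniform hypergraph. A $(v,e)$-configuration in an $r$-graph is a subgraph with $e$ edges and at most $v$ vertices. $f_r(n,v,e)$ denotes the maximum number of edges in an $r$-graph on $n$ vertices containing no $(v,e)$-configuration. A (Berge) cycle of length $k\ge 2$ in a hypergraph is an alternating sequence $v_1,e_1,v_2,e_2,\dots,v_k,e_k$ of distinct vertices $v_i$ and distinct edges $e_i$ such that $v_i,v_{i+1}\in e_i$ for each $i$ (indices mod $k$); e.g. a $2$-cycle is a pair of edges sharing two distinct vertices. The girth of an $r$-graph is the length of its shortest cycle (infinite if there is none). $h_r(n,g)$ denotes the maximum number of edges in an $r$-graph on $n$ vertices of girth greater than $g$. *)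

From mathcomp Require Import all_boot all_order.
Set Implicit Arguments. Unset Strict Implicit. Unset Printing Implicit Defensive.

Definition uniform (r n : nat) (H : {set {set 'I_n}}) : bool :=
  [forall E in H, #|E| == r].

Definition has_config (n v e : nat) (H : {set {set 'I_n}}) : bool :=
  [exists F : {set {set 'I_n}},
     [&& F \subset H, #|F| == e & #|cover F| <= v]].

Definition has_cycle (n k : nat) (H : {set {set 'I_n}}) : bool :=
  (1 < k) &&
  [exists vs : {ffun 'I_k -> 'I_n}, exists es : {ffun 'I_k -> {set 'I_n}},
     [&& injectiveb vs, injectiveb es &
         [forall i : 'I_k, [&& es i \in H, vs i \in es i & vs (ordS i) \in es i]]]].

Definition girth_gt (n g : nat) (H : {set {set 'I_n}}) : bool :=
  [forall k : 'I_g.+1, ~~ has_cycle k H].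

Definition f_r (r n v e : nat) : nat :=
  \max_(H : {set {set 'I_n}} | uniform r H && ~~ has_config v e H) #|H|.

Definition h_r (r n g : nat) : nat :=
  \max_(H : {set {set 'I_n}} | uniform r H && girth_gt g H) #|H|.

From mathcomp Require Import all_boot all_order.
From mathcomp Require Import zify.
Set Implicit Arguments. Unset Strict Implicit. Unset Printing Implicit Defensive.

(* If all cycles are longer than e, any e edges form a Berge-acyclic hypergraph,
   and an acyclic hypergraph with c components spans (r-1)e + c > (r-1)e
   vertices: growing a component edge by edge from one edge, an edge meeting the
   previous ones in two vertices would close a cycle. Hence h_r <= f_r.
   Conversely, let H be r-uniform without ((r-1)e, e)-configurations. The edges
   of H lying in components with at least e edges form a hypergraph of girth
   greater than e, since a k-cycle (k <= e) spans at most (r-1)k vertices and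
   can be grown inside its component into e edges on at most (r-1)e vertices.
   If the union K of the other, small, components has at least e edges, or if
   there is a large part, K spans at least (r-1)|K| vertices: otherwise some
   small components together with a tree-like piece of one more component would
   form a configuration. As these vertices avoid the large part, K can be traded
   for |K| edges that share one vertex of the large part and are otherwise new.
   Without a large part, K is traded for a loose cycle of length |K| if |K| > e,
   and otherwise for |K| edges through one vertex, which fit since n > (r-1)e.
   Neither change creates a cycle of length at most e. *)

Section SetFacts.
Variable T : finType.
Implicit Types (A B : {set T}) (P Q : {set {set T}}).

Lemma disjointNP A B : reflect (exists2 x, x \in A & x \in B) (~~ [disjoint A & B]).
Proof.
rewrite -setI_eq0; apply: (iffP (set0Pn _)) => [[x]|[x xA xB]].
  by rewrite inE => /andP[]; exists x.
by exists x; rewrite inE xA.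
Qed.

Lemma cardsU_disjoint A B : [disjoint A & B] -> #|A :|: B| = #|A| + #|B|.
Proof. by move=> dAB; apply/eqP; rewrite (eq_leqif (leq_card_setU A B)). Qed.

Lemma cover0 : cover (set0 : {set {set T}}) = set0.
Proof. by rewrite /cover big_set0. Qed.

Lemma coverU P Q : cover (P :|: Q) = cover P :|: cover Q.
Proof. by rewrite /cover bigcup_setU. Qed.

Lemma coverU1 A P : cover (A |: P) = A :|: cover P.
Proof. by rewrite coverU cover1. Qed.

Lemma coverS P Q : P \subset Q -> cover P \subset cover Q.
Proof. by move=> sPQ; apply/bigcupsP => A PA; apply: bigcup_max (subsetP sPQ A PA) _. Qed.

Lemma card_bigcup_disjoint (I : finType) (J : {set I}) (F : I -> {set T}) :
  {in J &, forall i j, i != j -> [disjoint F i & F j]} ->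
  #|\bigcup_(i in J) F i| = \sum_(i in J) #|F i|.
Proof.
elim: {J}_.+1 {-2}J (ltnSn #|J|) => // m IH J szJ dF.
have [->|[i Ji]] := set_0Vmem J; first by rewrite big_set0 big_set0 cards0.
rewrite (big_setD1 i Ji) (big_setD1 i Ji) /= cardsU_disjoint.
  rewrite IH //; first by move: szJ; rewrite (cardsD1 i J) Ji.
  by move=> j k /setD1P[_ Jj] /setD1P[_ Jk]; apply: dF.
apply: bigcup_disjoint => j /setD1P[ji Jj].
by apply: dF; rewrite // eq_sym.
Qed.

Lemma card_bigcup_le (I : finType) (J : {pred I}) (F : I -> {set T}) :
  #|\bigcup_(i in J) F i| <= \sum_(i in J) #|F i|.
Proof.
elim/big_ind2: _ => [|m1 X1 m2 X2 h1 h2|]; rewrite ?cards0 //.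
by apply: leq_trans (leq_card_setU X1 X2) _; apply: leq_add.
Qed.

End SetFacts.

Section Components.
Variable T : finType.
Implicit Types (G H S C B P : {set {set T}}) (E X Y Z : {set T}).
Implicit Types (SS : {set {set {set T}}}).

Definition meets H : rel {set T} :=
  fun X Y => [&& X \in H, Y \in H & ~~ [disjoint X & Y]].

Lemma meets_sym H : symmetric (meets H).
Proof. by move=> X Y; rewrite /meets andbCA disjoint_sym andbA. Qed.

Definition component H E := [set Y in H | connect (meets H) E Y].

Definition components H := [set component H E | E in H].

Lemma component_sub H E : component H E \subset H.
Proof. by apply/subsetP => Y; rewrite inE => /andP[]. Qed.

Lemma mem_component H E : E \in H -> E \in component H E.
Proof. by move=> EH; rewrite inE EH connect0. Qed.

Lemma component_eq H E Y : Y \in component H E -> component H Y = component H E.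
Proof.
rewrite inE => /andP[_ cEY]; apply/setP => Z; rewrite !inE; case: (Z \in H) => //=.
by rewrite (same_connect (sym_connect_sym (meets_sym H)) cEY).
Qed.

Lemma component_closed H E Y :
  Y \in H -> ~~ [disjoint Y & cover (component H E)] -> Y \in component H E.
Proof.
move=> YH /disjointNP[v vY /bigcupP[X XC vX]]; move: (XC); rewrite !inE YH.
case/andP=> XH cEX; apply: connect_trans cEX (connect1 _).
by rewrite /meets XH YH; apply/disjointNP; exists v.
Qed.

Lemma componentS G H E : G \subset H -> component G E \subset component H E.
Proof.
move=> sGH; apply/subsetP => X; rewrite !inE => /andP[XG cEX].
rewrite (subsetP sGH X XG); apply: connect_sub cEX => A B /and3P[AG BG dAB].
by apply: connect1; rewrite /meets (subsetP sGH A AG) (subsetP sGH B BG).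
Qed.

Lemma components_disjoint H C C' :
  C \in components H -> C' \in components H -> C != C' ->
  [disjoint C & C'] /\ [disjoint cover C & cover C'].
Proof.
move=> /imsetP[E _ ->] /imsetP[E' _ ->] neq; split.
  apply: contraR neq => /disjointNP[X XC XC'].
  by rewrite -(component_eq XC) (component_eq XC').
apply: contraR neq => /disjointNP[v /bigcupP[X XC vX] vC'].
have YC : X \in component H E'.
  by apply: component_closed (subsetP (component_sub H E) X XC) _; apply/disjointNP; exists v.
by rewrite -(component_eq XC) (component_eq YC).
Qed.

Lemma cover_components H : cover (components H) = H.
Proof.
apply/setP => X; apply/bigcupP/idP => [[C /imsetP[E _ ->]]|XH].
  exact: subsetP (component_sub H E) X.
by exists (component H X); [apply: imset_f | apply: mem_component].
Qed.

Lemma cover_components_sub H SS : SS \subset components H -> cover SS \subset H.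
Proof.
by move=> sSS; apply/bigcupsP => C /(subsetP sSS) /imsetP[E _ ->]; apply: component_sub.
Qed.

Lemma card_cover_components H SS : SS \subset components H ->
  #|cover SS| = \sum_(C in SS) #|C| /\
  #|cover (cover SS)| = \sum_(C in SS) #|cover C|.
Proof.
move=> sSS; have dSS C C' (SC : C \in SS) (SC' : C' \in SS) :=
  components_disjoint (subsetP sSS C SC) (subsetP sSS C' SC').
split; first by apply: card_bigcup_disjoint => C C' SC SC' /(dSS _ _ SC SC')[].
have -> : cover (cover SS) = \bigcup_(C in SS) cover C.
  apply/setP => v; apply/bigcupP/bigcupP.
    by case=> X /bigcupP[C SC XC] vX; exists C => //; apply/bigcupP; exists X.
  by case=> C SC /bigcupP[X XC vX]; exists X => //; apply/bigcupP; exists C.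
by apply: card_bigcup_disjoint => C C' SC SC' /(dSS _ _ SC SC')[].
Qed.

Lemma card_cover_ge_components r H :
  {in components H, forall C, (r - 1) * #|C| < #|cover C|} ->
  (r - 1) * #|H| + #|components H| <= #|cover H|.
Proof.
move=> sparse; have [cE cV] := card_cover_components (subxx (components H)).
rewrite -[in #|cover H|](cover_components H) cV.
rewrite -[in #|H|](cover_components H) cE big_distrr -sum1_card -big_split.
by apply: leq_sum => C HC /=; rewrite addn1 sparse.
Qed.

Lemma disjoint_cover_components H SS C : SS \subset components H ->
  C \in components H -> C \notin SS -> [disjoint C & cover SS].
Proof.
move=> sSS CH CSS; apply: bigcup_disjoint => C' SC'.
have [] // := components_disjoint CH (subsetP sSS C' SC').
by apply: contraNneq CSS => ->.
Qed.

Lemma disjoint_cover_setD_components H SS : SS \subset components H ->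
  [disjoint cover (cover SS) & cover (H :\: cover SS)].
Proof.
move=> sSS; apply: contraT => /disjointNP[v /bigcupP[X /bigcupP[C SC XC] vX]].
case/bigcupP=> Y /setDP[YH YK] vY; have /imsetP[E _ defC] := subsetP sSS C SC.
have YC : Y \in C.
  rewrite defC; apply: component_closed YH _; apply/disjointNP; exists v => //.
  by apply/bigcupP; exists X; rewrite // -defC.
by case/negP: YK; apply/bigcupP; exists C.
Qed.

Definition small_components H e := [set C in components H | #|C| < e].

Definition small_part H e := cover (small_components H e).

Lemma small_components_sub H e : small_components H e \subset components H.
Proof. by apply/subsetP => C; rewrite inE => /andP[]. Qed.

Lemma large_component H e X : X \in H :\: small_part H e -> e <= #|component H X|.
Proof.
case/setDP=> XH; rewrite leqNgt; apply: contra => small.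
by apply/bigcupP; exists (component H X); [rewrite inE small imset_f | apply: mem_component].
Qed.

End Components.

Section Growth.
Variable T : finType.
Implicit Types (H S C B P : {set {set T}}) (E X Y : {set T}).

Definition hconnected C := forall S, S \subset C -> S != set0 -> S != C ->
  exists2 Y, Y \in C :\: S & ~~ [disjoint Y & cover S].

Lemma component_connected H E : hconnected (component H E).
Proof.
move=> S sSC /set0Pn[A SA] neSC; apply/exists_inP; apply: contraR neSC.
rewrite negb_exists_in => /forall_inP noexit.
have symH := sym_connect_sym (meets_sym H).
have clS : closed (meets H) S.
  apply: (intro_closed symH) => X Y /and3P[_ YH /disjointNP[v vX vY]] SX.
  have meetS : ~~ [disjoint Y & cover S].
    by apply/disjointNP; exists v => //; apply/bigcupP; exists X.
  have YC : Y \in component H E.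
    apply: component_closed YH _; apply: contraNN meetS; exact/disjointWr/coverS.
  by apply: contraT => notSY; have := noexit Y; rewrite inE notSY YC meetS => /(_ isT).
rewrite eqEsubset sSC; apply/subsetP => B; rewrite inE => /andP[_ cEB].
have := subsetP sSC A SA; rewrite inE symH => /andP[_ cAE].
by rewrite -(closed_connect clS (connect_trans cAE cEB)).
Qed.

Inductive grown S : {set {set T}} -> Prop :=
| grown_refl : grown S S
| grown_step P Y : grown S P -> Y \notin P -> ~~ [disjoint Y & cover P] ->
    grown S (Y |: P).

Lemma grown_sub S P : grown S P -> S \subset P.
Proof. by elim=> // P' Y _ sSP' _ _; apply: subset_trans sSP' (subsetUr _ _). Qed.

Lemma grown_in_connected C S q : hconnected C -> S \subset C -> S != set0 ->
  #|S| <= q <= #|C| -> exists P, [/\ grown S P, P \subset C & #|P| = q].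
Proof.
move=> conC sSC S0; elim: q => [|q IH].
  by rewrite leqn0 cards_eq0 (negPf S0).
case/andP=> Sq qC; have [Sq1|ltSq] := eqVneq #|S| q.+1.
  by exists S; split=> //; exact: grown_refl.
have [|P [gP sPC cP]] := IH; first by rewrite -ltnS ltn_neqAle ltSq Sq (ltnW qC).
have P0 : P != set0 by apply: contraTneq (grown_sub gP) => ->; rewrite subset0.
have nePC : P != C by apply: contraTneq qC => <-; rewrite cP ltnn.
have [Y] := conC P sPC P0 nePC; rewrite inE => /andP[YP YC] mYP.
exists (Y |: P); split; first exact: grown_step.
  by rewrite subUset sub1set YC.
by rewrite cardsU1 YP cP.
Qed.

Lemma grown_in_component H E q : E \in H -> 0 < q <= #|component H E| ->
  exists P, [/\ grown [set E] P, P \subset component H E & #|P| = q].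
Proof.
move=> EH; rewrite -{1}(cards1 E); apply: grown_in_connected.
- exact: component_connected.
- by rewrite sub1set mem_component.
- by rewrite -card_gt0 cards1.
Qed.

Lemma grown_component H E : E \in H -> grown [set E] (component H E).
Proof.
move=> EH; have [|P [gP sPC cP]] := @grown_in_component H E #|component H E| EH.
  by rewrite leqnn andbT card_gt0; apply/set0Pn; exists E; apply: mem_component.
have /eqP<- // : P == component H E by rewrite eqEcard sPC cP leqnn.
Qed.

Lemma grown_cover_le r S P : {in P, forall Y, #|Y| = r} -> grown S P ->
  #|cover P| + (r - 1) * #|S| <= #|cover S| + (r - 1) * #|P|.
Proof.
move=> rP gP; elim: gP rP => // P' Y _ IH YP' /disjointNP[v vY vP'] rP.
have := IH (sub_in1 (subsetP (subsetUr _ _)) rP).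
have := cardsUI Y (cover P'); have := rP Y (setU11 Y P').
have : 0 < #|Y :&: cover P'| by apply/card_gt0P; exists v; rewrite inE vY.
rewrite coverU1 cardsU1 YP'; lia.
Qed.

Definition sparse_pieces r C := forall q, 0 < q <= #|C| ->
  exists P, [/\ P \subset C, #|P| = q & #|cover P| <= (r - 1) * q + 1].

Lemma component_sparse_pieces r H E : {in H, forall Y, #|Y| = r} -> E \in H ->
  sparse_pieces r (component H E).
Proof.
move=> rH EH q qC; have [P [gP sPC cP]] := grown_in_component EH qC.
exists P; split=> //; rewrite -cP.
have sPH := subset_trans sPC (component_sub H E).
have := grown_cover_le (sub_in1 (subsetP sPH) rH) gP.
by rewrite cover1 cards1 (rH E EH); lia.
Qed.

End Growth.

Section BergePaths.
Variable T : finType.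
Implicit Types (P Q : {set {set T}}) (E Y : {set T}) (a b c : T).

Definition berge_path P a b l (vs : nat -> T) (es : nat -> {set T}) :=
  [/\ vs 0 = a, vs l = b,
      (forall i j, i <= l -> j <= l -> vs i = vs j -> i = j),
      (forall i j, i < l -> j < l -> es i = es j -> i = j) &
      (forall i, i < l -> [/\ es i \in P, vs i \in es i & vs i.+1 \in es i])].

Lemma berge_path_nil P a : berge_path P a a 0 (fun=> a) (fun=> set0).
Proof. by split=> //; case=> [|?] [|?]. Qed.

Lemma berge_pathS P Q a b l vs es : P \subset Q ->
  berge_path P a b l vs es -> berge_path Q a b l vs es.
Proof.
move=> sPQ [v0 vl vinj einj step]; split=> // i il.
by have [eP ? ?] := step i il; split=> //; apply: subsetP sPQ _ eP.
Qed.

Lemma berge_path_rev P a b l vs es : berge_path P a b l vs es ->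
  berge_path P b a l (fun i => vs (l - i)) (fun i => es (l.-1 - i)).
Proof.
move=> [v0 vl vinj einj step]; split; rewrite ?subn0 ?subnn //.
- by move=> i j il jl /vinj; rewrite !leq_subr => /(_ isT isT); lia.
- by move=> i j il jl /einj; lia.
move=> i il; have [eP vi vi1] := step (l.-1 - i) ltac:(lia).
have -> : l - i = (l.-1 - i).+1 by lia.
by have -> : l - i.+1 = l.-1 - i by lia.
Qed.

Lemma berge_path_cover P a b l vs es : berge_path P a b l vs es ->
  a \in cover P -> forall i, i <= l -> vs i \in cover P.
Proof.
move=> [v0 _ _ _ step] aP [|i] il; first by rewrite v0.
by have [eP _ vi] := step i il; apply/bigcupP; exists (es i).
Qed.

Lemma berge_path_gt0 P a b l vs es : berge_path P a b l vs es -> a != b -> 0 < l.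
Proof. by case: l => // -[<- <-]; rewrite eqxx. Qed.

Lemma berge_path_card P a b l vs es : berge_path P a b l vs es -> l <= #|P|.
Proof.
move=> [_ _ _ einj step].
have inj : injective (fun i : 'I_l => es i).
  by move=> i j /(einj _ _ (ltn_ord i) (ltn_ord j)) /val_inj.
rewrite -[l in l <= _]card_ord -(card_imset _ inj); apply: subset_leq_card.
by apply/subsetP => _ /imsetP[i _ ->]; have [] := step i (ltn_ord i).
Qed.

Lemma berge_path_cons P Y a b c l vs es : berge_path P c b l vs es ->
  Y \notin P -> a \in Y -> c \in Y -> (forall i, i <= l -> vs i != a) ->
  berge_path (Y |: P) a b l.+1 (fun i => if i is i'.+1 then vs i' else a)
                               (fun i => if i is i'.+1 then es i' else Y).
Proof.
move=> [v0 vl vinj einj step] YP aY cY avoid; split=> //.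
- move=> [|i] [|j] //= il jl; first by move=> /esym/eqP; rewrite (negPf (avoid _ jl)).
    by move=> /eqP; rewrite (negPf (avoid _ il)).
  by move=> /vinj ->.
- move=> [|i] [|j] //= il jl.
  + by move=> eY; have [] := step j jl; rewrite -eY (negPf YP).
  + by move=> eY; have [] := step i il; rewrite eY (negPf YP).
  + by move=> /einj ->.
move=> [|i] il /=; first by rewrite setU11 aY v0.
by have [eP ? ?] := step i il; rewrite inE eP orbT.
Qed.

Lemma grown_berge_path E P : grown [set E] P -> forall a b,
  a \in cover P -> b \in cover P -> exists l vs es, berge_path P a b l vs es.
Proof.
have nil P' a : exists l vs es, berge_path P' a a l vs es.
  by exists 0, (fun=> a), (fun=> set0); apply: berge_path_nil.
elim=> [|P' Y gP IH YP' /disjointNP[c cY cP']] a b.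
  rewrite cover1 => aE bE; have [<-|ab] := eqVneq a b; first exact: nil.
  rewrite -[[set E]]setU0; do 3!eexists; apply: (berge_path_cons (berge_path_nil _ b)).
  - by rewrite inE.
  - exact: aE.
  - exact: bE.
  - by move=> i _; rewrite eq_sym.
have ext a' b' : a' \notin cover P' -> a' \in Y -> b' \in Y :|: cover P' ->
    exists l vs es, berge_path (Y |: P') a' b' l vs es.
  move=> aP aY; rewrite inE => bYP; have [<-|ab] := eqVneq a' b'; first exact: nil.
  suff [c' [l [vs [es [pth c'Y avoid]]]]] : exists c' l vs es,
      [/\ berge_path P' c' b' l vs es, c' \in Y & forall i, i <= l -> vs i != a'].
    by do 3!eexists; apply: berge_path_cons pth YP' aY c'Y avoid.
  have [bP|bP] := boolP (b' \in cover P').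
    have [l [vs [es pth]]] := IH c b' cP' bP; exists c, l, vs, es; split=> // i il.
    by apply: contraNneq aP => <-; apply: berge_path_cover pth cP' i il.
  exists b', 0, (fun=> b'), (fun=> set0); split; first exact: berge_path_nil.
    by move: bYP; rewrite (negPf bP) orbF.
  by move=> i _; rewrite eq_sym.
rewrite coverU1 => aYP bYP; have [aP|aP] := boolP (a \in cover P'); last first.
  by apply: ext => //; move: aYP; rewrite inE (negPf aP) orbF.
have [bP|bP] := boolP (b \in cover P'); last first.
  have [|l [vs [es pth]]] := ext b a bP _ aYP; first by move: bYP; rewrite inE (negPf bP) orbF.
  by do 3!eexists; apply: berge_path_rev pth.
have [l [vs [es pth]]] := IH a b aP bP.
by exists l, vs, es; apply: berge_pathS pth; apply: subsetUr.
Qed.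

End BergePaths.

Section Cyclic.
Variable k : nat.
Implicit Types (i j : 'I_k) (I : {set 'I_k}).

Lemma ordS_neq i : 1 < k -> ordS i != i.
Proof.
move=> k1; apply/eqP => /(congr1 val) /=; have := ltn_ord i.
case: (ltngtP i.+1 k) => [lt|//|eq]; first by rewrite modn_small //; lia.
by rewrite eq modnn; lia.
Qed.

Lemma ordSS_neq i : 2 < k -> ordS (ordS i) != i.
Proof.
move=> k2; apply/eqP => /(congr1 val) /=; have := ltn_ord i.
case: (ltngtP i.+1 k) => [lt|//|eq]; last by rewrite eq modnn modn_small; lia.
rewrite (modn_small lt); case: (ltngtP i.+2 k) => [lt2|gt2|eq2];
  [rewrite modn_small // | | rewrite eq2 modnn]; lia.
Qed.

Lemma iter_ordS i m : val (iter m (@ordS k) i) = (i + m) %% k.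
Proof.
elim: m => [|m IH] /=; first by rewrite addn0 modn_small.
by rewrite IH -addn1 modnDml -addnA addn1.
Qed.

Lemma ordS_closed_setT I i : i \in I -> (forall j, j \in I -> ordS j \in I) -> I = setT.
Proof.
move=> Ii clI; apply/setP => j; rewrite inE.
have -> : j = iter (j + k - i) (@ordS k) i.
  apply: val_inj; rewrite iter_ordS; have := ltn_ord i; have := ltn_ord j => ? ?.
  by rewrite addnBA ?addKn ?modnDr ?modn_small //; lia.
by elim: (j + k - i) => //= m; apply: clI.
Qed.

End Cyclic.

Section Cycles.
Variable n : nat.
Implicit Types (G H P S : {set {set 'I_n}}) (E Y Z : {set 'I_n}).

Lemma uniformP r H : reflect {in H, forall E, #|E| = r} (uniform r H).
Proof. by apply: (iffP forall_inP) => rH E /rH /eqP. Qed.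

Lemma has_cycleP k H : reflect
  (1 < k /\ exists (vs : 'I_k -> 'I_n) (es : 'I_k -> {set 'I_n}),
     [/\ injective vs, injective es &
         forall i, [/\ es i \in H, vs i \in es i & vs (ordS i) \in es i]])
  (has_cycle k H).
Proof.
apply: (iffP andP) => [[k1 /existsP[vs /existsP[es]]]|[k1 [vs [es [ivs ies cyc]]]]].
  case/and3P=> /injectiveP ivs /injectiveP ies /forallP cyc.
  by split=> //; exists vs, es; split=> // i; apply/and3P.
split=> //; apply/existsP; exists [ffun i => vs i]; apply/existsP; exists [ffun i => es i].
apply/and3P; split; try apply/injectiveP => i j; rewrite ?ffunE.
- exact: ivs.
- exact: ies.
by apply/forallP => i; rewrite !ffunE; apply/and3P; apply: cyc.
Qed.

Lemma has_cycleS k G H : G \subset H -> has_cycle k G -> has_cycle k H.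
Proof.
move=> sGH /has_cycleP[k1 [vs [es [ivs ies cyc]]]]; apply/has_cycleP; split=> //.
exists vs, es; split=> // i; have [eG ? ?] := cyc i.
by split=> //; apply: subsetP sGH _ eG.
Qed.

Lemma has_cycle_berge_path P Y a b l vs es : berge_path P a b l vs es ->
  a != b -> Y \notin P -> a \in Y -> b \in Y -> has_cycle l.+1 (Y |: P).
Proof.
move=> pth ab YP aY bY; have l0 := berge_path_gt0 pth ab.
case: pth => v0 vl vinj einj step.
apply/has_cycleP; split; first by rewrite ltnS.
exists (fun i => vs i), (fun i => if i < l then es i else Y); split.
- by move=> i j /(vinj _ _ (ltn_ord i) (ltn_ord j)) /val_inj.
- move=> i j; case: ltnP => il; case: ltnP => jl.
  + by move=> /(einj _ _ il jl) /val_inj.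
  + by move=> eY; have [] := step i il; rewrite eY (negPf YP).
  + by move=> eY; have [] := step j jl; rewrite -eY (negPf YP).
  + by move=> _; apply: ord_inj; have := ltn_ord i; have := ltn_ord j; lia.
move=> i; case: ltnP => il /=.
  have [eP ? ?] := step i il; rewrite modn_small ?ltnS // inE eP orbT; split=> //.
have -> : i = l :> nat by have := ltn_ord i; lia.
by rewrite setU11 vl bY modnn v0 aY.
Qed.

Lemma grown_dense_cycle r E P : 0 < r -> {in P, forall Y, #|Y| = r} ->
  grown [set E] P -> #|cover P| <= (r - 1) * #|P| ->
  exists2 k, 1 < k <= #|P| & has_cycle k P.
Proof.
move=> r0 rP gP; elim: gP rP => [|P' Y gP IH YP' meetY] rP.
  by rewrite cover1 cards1 (rP E (set11 E)); lia.
have rP' := sub_in1 (subsetP (subsetUr [set Y] P')) rP.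
have [two|le1] := ltnP 1 #|Y :&: cover P'|.
  case/card_gt1P: two => a [b [/setIP[aY aP] /setIP[bY bP] ab]] _.
  have [l [vs [es pth]]] := grown_berge_path gP aP bP.
  exists l.+1; last exact: has_cycle_berge_path pth ab YP' aY bY.
  rewrite cardsU1 YP' /= add1n !ltnS (berge_path_gt0 pth ab).
  exact: berge_path_card pth.
have : 0 < #|Y :&: cover P'|.
  by case/disjointNP: meetY => v vY vP; apply/card_gt0P; exists v; rewrite inE vY.
move=> pos dense; have [|k kP cyc] := IH rP'.
  move: dense; have := cardsUI Y (cover P'); have := rP Y (setU11 Y P').
  by rewrite coverU1 cardsU1 YP'; lia.
exists k; first by rewrite cardsU1 YP'; lia.
by apply: has_cycleS cyc; apply: subsetUr.
Qed.

Lemma cycle_edges r k H : {in H, forall E, #|E| = r} -> has_cycle k H ->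
  exists2 E, E \in H & exists S,
    [/\ S \subset component H E, #|S| = k & #|cover S| <= (r - 1) * k].
Proof.
move=> rH /has_cycleP[k1 [vs [es [ivs ies cyc]]]].
have k0 : 0 < k by lia.
pose i0 := Ordinal k0; have [E0H _ _] := cyc i0.
exists (es i0) => //; exists [set es i | i : 'I_k]; split.
- have allC : [set i | es i \in component H (es i0)] = setT.
    apply: (ordS_closed_setT (i := i0)); first by rewrite inE mem_component.
    move=> j; rewrite inE => Cj; rewrite inE.
    have [_ _ vj] := cyc j; have [eSjH vSj _] := cyc (ordS j).
    apply: component_closed eSjH _; apply/disjointNP; exists (vs (ordS j)) => //.
    by apply/bigcupP; exists (es j).
  by apply/subsetP => _ /imsetP[i _ ->]; have := in_setT i; rewrite -allC inE.
- by rewrite card_imset ?card_ord.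
rewrite cover_imset.
(* [vs (ordS i)] is removed from [es i] but still counted in [es (ordS i)]. *)
apply: (leq_trans (subset_leq_card (_ : _ \subset \bigcup_i (es i :\ vs (ordS i))))).
  apply/subsetP => v /bigcupP[i _ vi].
  have [vSi|vSi] := eqVneq v (vs (ordS i)); last by apply/bigcupP; exists i; rewrite ?inE ?vSi.
  apply/bigcupP; exists (ordS i) => //; have [_ vSi' _] := cyc (ordS i).
  by rewrite vSi in_setD1 vSi' andbT (inj_eq ivs) eq_sym ordS_neq.
apply: leq_trans (card_bigcup_le _ _) _.
rewrite (eq_bigr (fun=> r - 1)) ?sum_nat_const ?card_ord 1?mulnC // => i _.
have [eH _ vSi] := cyc i; have := cardsD1 (vs (ordS i)) (es i).
by rewrite vSi (rH _ eH) add1n => ->; rewrite subn1.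
Qed.

Lemma has_cycle_pendant k G H : G \subset H ->
  (forall Y, Y \in H :\: G -> forall a b, a \in Y -> b \in Y -> a != b ->
     {in H, forall Z, a \in Z -> Z = Y} \/ {in H, forall Z, b \in Z -> Z = Y}) ->
  has_cycle k H -> has_cycle k G.
Proof.
move=> sGH pendant /has_cycleP[k1 [vs [es [ivs ies cyc]]]].
apply/has_cycleP; split=> //; exists vs, es; split=> // i.
have [eH vi vSi] := cyc i; split=> //; apply: contraT => eG.
have ab : vs i != vs (ordS i) by rewrite (inj_eq ivs) eq_sym ordS_neq.
have eHG : es i \in H :\: G by rewrite inE eG.
case: (pendant _ eHG _ _ vi vSi ab) => priv.
  have [eH' _ vi'] := cyc (ord_pred i); rewrite ord_predK in vi'.
  move/(_ _ eH' vi')/ies: priv => /eqP.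
  by rewrite -{2}(ord_predK i) eq_sym (negPf (ordS_neq _ k1)).
have [eH' vSi' _] := cyc (ordS i).
by move/(_ _ eH' vSi')/ies: priv => /eqP; rewrite (negPf (ordS_neq _ k1)).
Qed.

End Cycles.

Lemma exists_sum_lt_setD1 (I : finType) (S : {set I}) (a b : I -> nat) :
  {in S, forall i, S :\ i != set0} ->
  \sum_(i in S) a i < \sum_(i in S) b i ->
  exists2 i, i \in S & \sum_(j in S :\ i) a j < \sum_(j in S :\ i) b j.
Proof.
move=> nonsingle lt.
have [i /andP[Si ba]|alt] := pickP [pred i | (i \in S) && (b i <= a i)].
  by exists i => //; move: lt; rewrite !(big_setD1 i Si) /=; lia.
have [S0|[i Si]] := set_0Vmem S; first by move: lt; rewrite S0 !big_set0.
exists i => //; have : \sum_(j in S :\ i) (a j + 1) <= \sum_(j in S :\ i) b j.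
  apply: leq_sum => j /setD1P[_ Sj]; have := alt j; rewrite /= Sj /= => /negbT.
  by rewrite -ltnNge addn1.
have := nonsingle i Si; rewrite -card_gt0 big_split sum1_card /=; lia.
Qed.

Section Configurations.
Variable n : nat.
Implicit Types (H B C P S A : {set {set 'I_n}}) (E X : {set 'I_n}).
Implicit Types (SS : {set {set {set 'I_n}}}).

Lemma has_configP (v e : nat) H :
  reflect (exists2 F : {set {set 'I_n}}, F \subset H & #|F| = e /\ #|cover F| <= v)
          (has_config v e H).
Proof.
apply: (iffP existsP) => [[F /and3P[sFH /eqP cF vF]]|[F sFH [cF vF]]].
  by exists F.
by exists F; rewrite sFH cF eqxx.
Qed.

Lemma has_config_union r e H A P : A \subset H -> P \subset H -> [disjoint A & P] ->
  #|A| + #|P| = e -> #|cover A| < (r - 1) * #|A| ->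
  #|cover P| <= (r - 1) * #|P| + 1 -> has_config ((r - 1) * e) e H.
Proof.
move=> sAH sPH dAP eAP vA vP; apply/has_configP; exists (A :|: P).
  by rewrite subUset sAH sPH.
rewrite cardsU_disjoint // eAP coverU; split=> //.
by apply: leq_trans (leq_card_setU _ _) _; rewrite -eAP mulnDr; lia.
Qed.

Lemma config_of_dense_piece r e H E S : {in H, forall X, #|X| = r} ->
  S \subset component H E -> S != set0 -> #|S| <= e <= #|component H E| ->
  #|cover S| <= (r - 1) * #|S| -> has_config ((r - 1) * e) e H.
Proof.
move=> rH sSC S0 Se vS.
have [P [gP sPC cP]] := grown_in_connected (@component_connected _ H E) sSC S0 Se.
have sPH := subset_trans sPC (component_sub H E).
have grow : #|cover P| + (r - 1) * #|S| <= #|cover S| + (r - 1) * #|P| :=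
  grown_cover_le (sub_in1 (subsetP sPH) rH) gP.
by apply/has_configP; exists P => //; split=> //; rewrite cP in grow; lia.
Qed.

Lemma girth_gt_no_config r e H : 0 < r -> 0 < e -> {in H, forall X, #|X| = r} ->
  girth_gt e H -> ~~ has_config ((r - 1) * e) e H.
Proof.
move=> r0 e0 rH /forallP girthH; apply/negP => /has_configP[F sFH [cF vF]].
have rF := sub_in1 (subsetP sFH) rH.
have [C /andP[FC vC]|sparse] :=
  pickP [pred C | (C \in components F) && (#|cover C| <= (r - 1) * #|C|)].
  case/imsetP: FC vC => E EF -> vC.
  have [k /andP[k1 kC] cyc] := grown_dense_cycle r0
    (sub_in1 (subsetP (component_sub F E)) rF) (grown_component EF) vC.
  have ke : k < e.+1 by rewrite ltnS -cF (leq_trans kC) ?subset_leq_card ?component_sub.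
  have := girthH (Ordinal ke); rewrite /= (has_cycleS _ cyc) //.
  exact: subset_trans (component_sub F E) sFH.
have pos : 0 < #|components F|.
  rewrite -cF card_gt0 in e0; case/set0Pn: e0 => E EF.
  by apply/card_gt0P; exists (component F E); apply: imset_f.
have lower : (r - 1) * #|F| + #|components F| <= #|cover F|.
  by apply: card_cover_ge_components => C FC; have := sparse C; rewrite /= FC /= ltnNge => ->.
by rewrite cF in lower; lia.
Qed.

(* Peel off components while the rest stays dense; once fewer than [e] edges
   remain, the component peeled off last (initially [B]) supplies the missing
   edges as a sparse piece. *)
Lemma config_of_dense_components r e H SS B : {in H, forall X, #|X| = r} ->
  SS \subset components H -> {in SS, forall C, #|C| < e} ->
  \sum_(C in SS) #|cover C| < \sum_(C in SS) (r - 1) * #|C| ->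
  B \subset H -> [disjoint B & cover SS] -> sparse_pieces r B ->
  e <= #|cover SS| + #|B| -> has_config ((r - 1) * e) e H.
Proof.
move=> rH; elim: {SS}_.+1 {-2}SS (ltnSn #|SS|) B => // m IH SS szSS B sSS small.
move=> dense sBH dB spB eSB; have [cE cV] := card_cover_components sSS.
have sSSH := cover_components_sub sSS.
have [lt|ge] := ltnP #|cover SS| e.
  have [|P [sPB cP vP]] := spB (e - #|cover SS|); first by apply/andP; split; lia.
  apply: (has_config_union sSSH (subset_trans sPB sBH)).
  - by rewrite disjoint_sym (disjointWl sPB dB).
  - by rewrite cP; lia.
  - by rewrite cV cE big_distrr.
  - by rewrite cP.
have nonsingle : {in SS, forall C, SS :\ C != set0}.
  move=> C SC; apply: contraTneq ge => SC0.
  by rewrite -ltnNge cE (big_setD1 C SC) /= SC0 big_set0 addn0 small.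
have [C SC dropC] := exists_sum_lt_setD1 nonsingle dense.
have sSS' : SS :\ C \subset components H := subset_trans (subsetDl _ _) sSS.
have /imsetP[E EH defC] := subsetP sSS C SC.
apply: (IH (SS :\ C) _ C) => //.
- by move: szSS; rewrite (cardsD1 C SS) SC.
- by move=> C' /setD1P[_ /small].
- by rewrite defC component_sub.
- by apply: disjoint_cover_components (subsetP sSS C SC) _; rewrite ?setD11.
- by rewrite defC; apply: component_sparse_pieces.
have [cE' _] := card_cover_components sSS'.
by rewrite cE' addnC -(big_setD1 _ SC) -cE.
Qed.

Lemma girth_gt_large r e H : {in H, forall X, #|X| = r} ->
  ~~ has_config ((r - 1) * e) e H -> girth_gt e (H :\: small_part H e).
Proof.
move=> rH noconf; apply/forallP => -[k ke] /=; apply/negP => cyc.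
have sGH := subsetDl H (small_part H e).
have [E GE [S [sSC cS vS]]] := cycle_edges (sub_in1 (subsetP sGH) rH) cyc.
have k1 : 1 < k by case/has_cycleP: cyc.
apply: (negP noconf); apply: (config_of_dense_piece rH (E := E) (S := S)).
- exact: subset_trans sSC (componentS _ sGH).
- by rewrite -card_gt0 cS; lia.
- by rewrite cS -ltnS ke large_component.
- by rewrite cS.
Qed.

Lemma card_cover_small r e H : {in H, forall X, #|X| = r} ->
  ~~ has_config ((r - 1) * e) e H ->
  e <= #|small_part H e| \/ H :\: small_part H e != set0 ->
  (r - 1) * #|small_part H e| <= #|cover (small_part H e)|.
Proof.
move=> rH noconf hyp; rewrite leqNgt; apply: contra noconf => dense.
have sSS := small_components_sub H e.
have [cE cV] := card_cover_components sSS.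
have small : {in small_components H e, forall C, #|C| < e}.
  by move=> C; rewrite inE => /andP[].
rewrite cV cE big_distrr in dense.
case: hyp => [eK|/set0Pn[X GX]].
  apply: (config_of_dense_components rH sSS small dense (sub0set H)).
  - by rewrite -setI_eq0 set0I.
  - by move=> q; rewrite cards0; lia.
  - by rewrite cards0 addn0.
have XH : X \in H by case/setDP: GX.
apply: (config_of_dense_components rH sSS small dense (component_sub H X)).
- apply: disjoint_cover_components sSS (imset_f _ XH) _.
  by rewrite inE imset_f //= -leqNgt large_component.
- exact: component_sparse_pieces.
- by rewrite (leq_trans (large_component GX)) ?leq_addl.
Qed.

End Configurations.

Lemma injection_into (I T : finType) (U : {set T}) :
  #|I| <= #|U| -> exists g : I -> T, injective g /\ forall i, g i \in U.
Proof.
move=> le; exists (fun i => enum_val (widen_ord le (enum_rank i))); split.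
  by move=> i j /enum_val_inj /(congr1 val) /= /val_inj /enum_rank_inj.
by move=> i; apply: enum_valP.
Qed.

Section Sunflower.
Variables (n r m : nat) (G : {set {set 'I_n}}) (x : 'I_n).
Variable g : 'I_m * 'I_(r - 1) -> 'I_n.
Hypotheses (g_inj : injective g) (g_fresh : forall p, g p \in ~: (x |: cover G)).
Variable t0 : 'I_(r - 1).

Definition petal j := x |: [set g (j, t) | t : 'I_(r - 1)].

Lemma g_petal j j' t : (g (j', t) \in petal j) = (j' == j).
Proof.
have := g_fresh (j', t); rewrite !inE negb_or => /andP[/negPf -> _] /=.
apply/imsetP/eqP => [[t' _ /g_inj [->]] //|->]; by exists t.
Qed.

Lemma petal_inj : injective petal.
Proof. by move=> j j' eq; apply/eqP; rewrite -(g_petal j' j t0) -eq g_petal. Qed.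

Lemma card_petal j : #|petal j| = r.
Proof.
rewrite cardsU1 card_imset; last by move=> t t' /g_inj [].
have -> : x \notin [set g (j, t) | t : 'I_(r - 1)].
  by apply/imsetP => -[t _ /esym xg]; have := g_fresh (j, t); rewrite xg !inE eqxx.
by rewrite card_ord add1n; have := ltn_ord t0; lia.
Qed.

Definition sunflower := G :|: [set petal j | j : 'I_m].

Lemma g_private j t : {in sunflower, forall Z : {set 'I_n}, g (j, t) \in Z -> Z = petal j}.
Proof.
move=> Z; rewrite inE => /orP[ZG gZ|/imsetP[j' _ ->]]; last by rewrite g_petal => /eqP->.
by have := g_fresh (j, t); rewrite !inE negb_or (_ : g (j, t) \in cover G) ?andbF //;
  apply/bigcupP; exists Z.
Qed.

Lemma girth_gt_sunflower e : girth_gt e G -> girth_gt e sunflower.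
Proof.
move=> /forallP girthG; apply/forallP => k; apply: contra (girthG k).
apply: has_cycle_pendant; first exact: subsetUl.
move=> Y; rewrite inE => /andP[YG]; rewrite inE (negPf YG) => /imsetP[j _ ->] a b aP bP ab.
case: (eqVneq a x) ab => [-> | ax] ab.
  right; move: bP; rewrite !inE => /orP[/eqP bx|/imsetP[t _ ->]]; last exact: g_private.
  by move: ab; rewrite bx eqxx.
by left; move: aP; rewrite !inE (negPf ax) => /imsetP[t _ ->]; apply: g_private.
Qed.

Lemma card_sunflower : #|sunflower| = #|G| + m.
Proof.
rewrite cardsU_disjoint ?card_imset ?card_ord //; first exact: petal_inj.
apply/pred0P => Y /=; apply/andP => -[YG /imsetP[j _ defY]].
by have := g_fresh (j, t0); rewrite !inE negb_or; case/andP=> _ /bigcupP; apply; exists Y;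
  rewrite // defY !inE (imset_f (fun t => g (j, t))) ?orbT.
Qed.

End Sunflower.

Section LooseCycle.
Variables (n r m : nat) (g : 'I_m * 'I_(r - 1) -> 'I_n) (t0 : 'I_(r - 1)).
Hypotheses (g_inj : injective g) (m_gt2 : 2 < m).

Definition loose_edge j := [set g (j, t) | t : 'I_(r - 1)] :|: [set g (ordS j, t0)].

Lemma g_loose_edge j j' t :
  (g (j', t) \in loose_edge j) = (j' == j) || (j' == ordS j) && (t == t0).
Proof.
rewrite !inE; apply/orP/orP => [[/imsetP[t' _ /g_inj [->]]|/eqP /g_inj [-> ->]]|].
- by left.
- by right; rewrite !eqxx.
by case=> [/eqP->|/andP[/eqP-> /eqP->]]; [left; apply: imset_f | right].
Qed.

Lemma loose_edge_inj : injective loose_edge.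
Proof.
move=> j j' eqj.
have h1 : g (j, t0) \in loose_edge j' by rewrite -eqj g_loose_edge eqxx.
have h2 : g (j', t0) \in loose_edge j by rewrite eqj g_loose_edge eqxx.
rewrite !g_loose_edge !eqxx !andbT in h1 h2.
case/orP: h1 => [/eqP //|/eqP jS]; case/orP: h2 => [/eqP -> //|/eqP j'S].
by have := ordSS_neq j' m_gt2; rewrite -jS -j'S eqxx.
Qed.

Lemma card_loose_edge j : #|loose_edge j| = r.
Proof.
have inj : injective (fun t => g (j, t)) by move=> t t' /g_inj [].
have disj : [disjoint [set g (j, t) | t : 'I_(r - 1)] & [set g (ordS j, t0)]].
  rewrite disjoint_sym disjoints1; apply/imsetP => -[t _ /g_inj [Sj _]].
  by have := ordS_neq j (ltnW m_gt2); rewrite Sj eqxx.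
by rewrite cardsU_disjoint // card_imset // cards1 card_ord; have := ltn_ord t0; lia.
Qed.

Definition loose_cycle := [set loose_edge j | j : 'I_m].

Lemma card_cover_loose_lower (I : {set 'I_m}) : I != set0 -> I != setT ->
  (r - 1) * #|I| < #|cover (loose_edge @: I)|.
Proof.
move=> I0 IT; have [j jI jSI] : exists2 j, j \in I & ordS j \notin I.
  apply/exists_inP; apply: contraR IT; rewrite negb_exists_in => /forall_inP clI.
  case/set0Pn: I0 => i Ii; apply/eqP/(ordS_closed_setT Ii) => j' /clI; exact: negbNE.
have sub : g (ordS j, t0) |: [set g p | p in setX I setT] \subset cover (loose_edge @: I).
  apply/subsetP => v; rewrite !inE => /orP[/eqP->|/imsetP[[j' t] /setXP[j'I _] ->]].
    by apply/bigcupP; exists (loose_edge j); rewrite ?imset_f // g_loose_edge !eqxx orbT.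
  by apply/bigcupP; exists (loose_edge j'); rewrite ?imset_f // g_loose_edge eqxx.
apply: leq_trans (subset_leq_card sub); rewrite cardsU1 card_imset // cardsX cardsT card_ord.
have -> : g (ordS j, t0) \notin [set g p | p in setX I setT].
  by apply/imsetP => -[[j' t] /setXP[j'I _] /g_inj [defj _]]; move: jSI; rewrite defj j'I.
by rewrite mulnC.
Qed.

Lemma girth_gt_loose_cycle e : e < m -> girth_gt e loose_cycle.
Proof.
move=> em; apply/forallP => -[k ke] /=; apply/negP => cyc.
have rL : {in loose_cycle, forall Y : {set 'I_n}, #|Y| = r}.
  by move=> _ /imsetP[j _ ->]; apply: card_loose_edge.
have [E _ [S [sSC cS vS]]] := cycle_edges rL cyc.
have sSL := subset_trans sSC (component_sub _ _).
pose I := [set j | loose_edge j \in S].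
have defS : S = loose_edge @: I.
  apply/setP => Y; apply/idP/imsetP => [SY|[j]]; last by rewrite inE => ? ->.
  by have /imsetP[j _ defY] := subsetP sSL Y SY; exists j; rewrite // inE -defY.
have cI : #|I| = k by rewrite -cS defS card_imset //; apply: loose_edge_inj.
have k1 : 1 < k by case/has_cycleP: cyc.
have I0 : I != set0 by rewrite -card_gt0 cI; lia.
have IT : I != setT.
  by apply: contraTneq em => IT; rewrite -leqNgt -ltnS -[m]card_ord -cardsT -IT cI.
have := card_cover_loose_lower I0 IT; rewrite -defS cI => lower.
by have := leq_ltn_trans vS lower; rewrite ltnn.
Qed.

End LooseCycle.

Section Replacement.
Variable n : nat.
Implicit Types (G H L : {set {set 'I_n}}) (X Y : {set 'I_n}) (x : 'I_n) (r e m : nat).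

Lemma exists_sunflower r e m G x : 1 < r -> {in G, forall Y, #|Y| = r} ->
  girth_gt e G -> (r - 1) * m <= #|~: (x |: cover G)| ->
  exists2 G' : {set {set 'I_n}}, uniform r G' & girth_gt e G' /\ #|G'| = #|G| + m.
Proof.
move=> r1 rG girthG room.
have [g [g_inj g_fresh]] : exists g : 'I_m * 'I_(r - 1) -> 'I_n,
    injective g /\ forall p, g p \in ~: (x |: cover G).
  by apply: injection_into; rewrite card_prod !card_ord mulnC.
have t0 : 'I_(r - 1) by exists 0; lia.
exists (sunflower G x g).
  by apply/uniformP => Y; rewrite inE => /orP[/rG //|/imsetP[j _ ->]]; apply: card_petal.
by split; [apply: girth_gt_sunflower | apply: card_sunflower].
Qed.

Lemma exists_loose_cycle r e m : 1 < r -> e < m -> 2 < m -> (r - 1) * m <= n ->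
  exists2 L : {set {set 'I_n}}, uniform r L & girth_gt e L /\ #|L| = m.
Proof.
move=> r1 em m2 room.
have [g [g_inj _]] : exists g : 'I_m * 'I_(r - 1) -> 'I_n,
    injective g /\ forall p, g p \in [set: 'I_n].
  by apply: injection_into; rewrite card_prod !card_ord cardsT card_ord mulnC.
have t0 : 'I_(r - 1) by exists 0; lia.
exists (loose_cycle g t0).
  by apply/uniformP => _ /imsetP[j _ ->]; apply: card_loose_edge.
split; first exact: girth_gt_loose_cycle.
by rewrite card_imset ?card_ord //; apply: loose_edge_inj.
Qed.

Lemma config_free_le_girth_gt r e H : 1 < r -> 1 < e -> (r - 1) * e < n ->
  {in H, forall X, #|X| = r} -> ~~ has_config ((r - 1) * e) e H ->
  exists2 G' : {set {set 'I_n}}, uniform r G' & girth_gt e G' /\ #|H| <= #|G'|.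
Proof.
move=> r1 e1 nbig rH noconf.
have sSS := small_components_sub H e.
have sKH : small_part H e \subset H := cover_components_sub sSS.
set K := small_part H e in sKH *; set G := H :\: K.
have cH : #|H| = #|G| + #|K| by rewrite -(cardsID K H) (setIidPr sKH) addnC.
have grow x : (r - 1) * #|K| <= #|~: (x |: cover G)| ->
    exists2 G' : {set {set 'I_n}}, uniform r G' & girth_gt e G' /\ #|H| <= #|G'|.
  move=> room; have [G' rG' [girthG' cG']] := exists_sunflower r1
    (sub_in1 (subsetP (subsetDl H K)) rH) (girth_gt_large rH noconf) room.
  by exists G' => //; rewrite cG' cH.
have key := card_cover_small rH noconf.
have [G0|/set0Pn[X GX]] := eqVneq G set0; last first.
  have [x xX] : exists x, x \in X.
    by apply/set0Pn; rewrite -card_gt0 (rH X (subsetP (subsetDl H K) X GX)); lia.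
  have xG : x \in cover G by apply/bigcupP; exists X.
  apply: (grow x); rewrite (setUidPr _) ?sub1set //.
  apply: leq_trans (key _) _; first by right; apply/set0Pn; exists X.
  by apply/subset_leq_card; rewrite -disjoints_subset disjoint_cover_setD_components.
have [eK|Ke] := ltnP e #|K|.
  have [|L rL [girthL cL]] := exists_loose_cycle r1 eK (leq_ltn_trans e1 eK).
    apply: leq_trans (key _) _; first by left; apply: ltnW.
    by apply: leq_trans (max_card _) _; rewrite card_ord.
  by exists L => //; rewrite cL cH G0 cards0.
have x : 'I_n by exists 0; apply: leq_ltn_trans (leq0n _) nbig.
apply: (grow x); rewrite G0 cover0 setU0 cardsC1 card_ord.
by apply: leq_trans (leq_mul (leqnn _) Ke) _; lia.
Qed.

End Replacement.

Theorem proposition1p10 (r e : nat) :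
  2 <= r -> 2 <= e ->
  exists n0 : nat, forall n : nat, n0 <= n ->
    f_r r n ((r - 1) * e) e = h_r r n e.
Proof.
move=> r2 e2; exists ((r - 1) * e).+1 => n nbig; apply/eqP; rewrite eqn_leq.
apply/andP; split; apply/bigmax_leqP => H /andP[/uniformP rH propH].
  have [G rG [girthG le]] := config_free_le_girth_gt r2 e2 nbig rH propH.
  by apply: leq_trans le (leq_bigmax_cond _ _); rewrite rG girthG.
apply: leq_bigmax_cond; rewrite girth_gt_no_config ?andbT //; first exact/uniformP.
  by apply: leq_trans r2.
by apply: leq_trans e2.
Qed.
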